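(* Let $\Pi$ be a ''linear model'' on a finite set $\mathcal X$, in the following sense: $\Pi$ is a convex set of probability distributions on $\mathcal X$, and for every probability distribution $\mathsf p$ on $\mathcal X$ there is a unique minimizer $\pi^*(\mathsf p)$ of $\pi\mapsto D_{KL}(\mathsf p\|\pi)$ over $\Pi$, which satisfies the Pythagorean identity $D_{KL}(\mathsf p\|\pi)=D_{KL}(\mathsf p\|\pi^*(\mathsf p))+D_{KL}(\pi^*(\mathsf p)\|\pi)$ for all $\pi\in\Pi$. Let $\hat{\mathsf p}_1,\dots,\hat{\mathsf p}_p$ be probability distributions on $\mathcal X$ with $D_{KL}(\hat{\mathsf p}_k\|\pi^*(\hat{\mathsf p}_k))<\infty$ for each $k$, set $\pi_k=\pi^*(\hat{\mathsf p}_k)$, and let $\lambda\in\Delta$. Then $$\pi^*(\hat{\mathsf p}_\lambda)=\sum_{k=1}^p\lambda_k\pi_k .$$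
   Context: Fix an integer $p\ge 1$, $\Delta=\{\lambda\in\mathbb R^p:\lambda_k\ge 0,\ \sum_k\lambda_k=1\}$, and $\hat{\mathsf p}_\lambda=\sum_k\lambda_k\hat{\mathsf p}_k$. $D_{KL}(P\|Q)=\sum_xP(x)\log\frac{P(x)}{Q(x)}\in[0,\infty]$ with conventions $0\log\frac0q=0$, $a\log\frac a0=+\infty$ for $a>0$. *)

From HB Require Import structures.
From mathcomp Require Import all_boot all_order all_algebra.
From mathcomp Require Import all_classical all_reals.
From mathcomp Require Import ereal sequences exp.
Set Implicit Arguments. Unset Strict Implicit. Unset Printing Implicit Defensive.
Import Order.TTheory GRing.Theory Num.Theory.
Local Open Scope ring_scope.

Section Defs.
Variables (R : realType) (X : finType).

Definition is_distr (P : X -> R) : Prop :=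
  (forall x, 0 <= P x) /\ \sum_(x : X) P x = 1.

Definition KL (P Q : X -> R) : \bar R :=
  (\sum_(x : X)
     (if P x == 0%R then 0%E
      else if Q x == 0%R then +oo%E
      else (P x * ln (P x / Q x))%R%:E))%E.

Definition in_simplex (p : nat) (lam : 'I_p -> R) : Prop :=
  (forall k, 0 <= lam k) /\ \sum_(k < p) lam k = 1.

Definition mix (p : nat) (lam : 'I_p -> R) (P : 'I_p -> X -> R) : X -> R :=
  fun x => \sum_(k < p) lam k * P k x.

End Defs.

From HB Require Import structures.
From mathcomp Require Import all_boot all_order all_algebra.
From mathcomp Require Import all_classical all_reals.
From mathcomp Require Import ereal sequences exp.
From mathcomp Require Import lra.
Import Order.TTheory GRing.Theory Num.Theory.
Set Implicit Arguments. Unset Strict Implicit.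
Local Open Scope ring_scope.

(* Write [KL P q = crossln P P - crossln P q], where [crossln P q] is linear
   in [P].  For [q] in the model with [P_lam << q], Pythagoras applied to
   each [phat k] turns [crossln (phat k) q] into a constant plus
   [crossln (pi_k) q]; averaging, [KL P_lam q + crossln m q] does not depend
   on [q], where [m = sum_k lam_k pi_k].  By Gibbs' inequality
   [crossln m q <= crossln m m], so [m], which lies in the convex model,
   minimizes [KL P_lam .] and is [pistar P_lam] by uniqueness. *)

Section Divergence.
Variables (R : realType) (X : finType).
Implicit Types (P Q q : X -> R).

Definition abscont P Q := forall x, P x != 0 -> Q x != 0.

Definition KLr P Q : R := \sum_(x : X) P x * ln (P x / Q x).

Definition crossln P Q : R := \sum_(x : X) P x * ln (Q x).

Lemma abscont_trans P Q q : abscont P Q -> abscont Q q -> abscont P q.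
Proof. by move=> PQ Qq x /PQ /Qq. Qed.

Lemma KL_abscont P Q : abscont P Q -> KL P Q = (KLr P Q)%:E.
Proof.
move=> PQ; rewrite /KL /KLr -sumEFin; apply: eq_bigr => x _.
case: ifPn => [/eqP->|Px]; first by rewrite mul0r.
by rewrite (negbTE (PQ x Px)).
Qed.

Lemma KL_eqy P Q x : P x != 0 -> Q x = 0 -> KL P Q = +oo%E.
Proof.
move=> Px Qx; apply/esum_eqyP; first by move=> i _; case: ifP => //; case: ifP.
by exists x; split => //; rewrite (negbTE Px) Qx eqxx.
Qed.

Lemma KL_lty_abscont P Q : (KL P Q < +oo)%E -> abscont P Q.
Proof. by move=> PQ x Px; apply/eqP => Qx; rewrite (KL_eqy Px Qx) ltxx in PQ. Qed.

Lemma KLr_crossln P Q : (forall x, 0 <= P x) -> (forall x, 0 <= Q x) ->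
  abscont P Q -> KLr P Q = crossln P P - crossln P Q.
Proof.
move=> P0 Q0 PQ; rewrite /KLr /crossln -sumrB; apply: eq_bigr => x _.
have [->|Px] := eqVneq (P x) 0; first by rewrite !mul0r subr0.
by rewrite ln_div ?mulrBr // posrE lt_def ?Px ?PQ ?P0 ?Q0.
Qed.

Lemma crossln_le_self m q : is_distr m -> is_distr q -> abscont m q ->
  crossln m q <= crossln m m.
Proof.
move=> [m0 m1] [q0 q1] mq; rewrite -subr_le0 /crossln -sumrB.
apply: (@le_trans _ _ (\sum_(x : X) (q x - m x))); last by rewrite sumrB m1 q1 subrr.
apply: ler_sum => x _.
have [->|mx] := eqVneq (m x) 0; first by rewrite !mul0r subrr subr0.
have mp : 0 < m x by rewrite lt_def mx m0.
have qp : 0 < q x by rewrite lt_def mq ?q0.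
rewrite -mulrBr -ln_div ?posrE //.
have : m x * ln (q x / m x) <= m x * (q x / m x - 1).
  rewrite ler_wpM2l // -[X in ln X](subrK 1) addrC le_ln1Dx //.
  by have := divr_gt0 qp mp; lra.
by rewrite mulrBr mulr1 mulrCA divff ?gt_eqF // mulr1.
Qed.

End Divergence.

Section Mixture.
Variables (R : realType) (X : finType) (n : nat).
Variables (lam : 'I_n -> R) (Q : 'I_n -> X -> R).
Hypothesis lam_ge0 : forall k, 0 <= lam k.

Lemma mix_ge0 : (forall k x, 0 <= Q k x) -> forall x, 0 <= mix lam Q x.
Proof. by move=> Q0 x; apply: sumr_ge0 => k _; rewrite mulr_ge0. Qed.

Lemma is_distr_mix : in_simplex lam -> (forall k, is_distr (Q k)) ->
  is_distr (mix lam Q).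
Proof.
move=> [_ lam1] Qd; split; first by apply: mix_ge0 => k; case: (Qd k).
rewrite /mix exchange_big /= -[RHS]lam1; apply: eq_bigr => k _.
by rewrite -mulr_sumr (Qd k).2 mulr1.
Qed.

Lemma abscont_mix_component k : (forall k x, 0 <= Q k x) -> lam k != 0 ->
  abscont (Q k) (mix lam Q).
Proof.
move=> Q0 lamk x Qkx; rewrite gt_eqF // (@lt_le_trans _ _ (lam k * Q k x)) //.
  by apply: mulr_gt0; rewrite lt_def ?lamk ?Qkx ?lam_ge0 ?Q0.
by rewrite /mix (bigD1 k) //= lerDl; apply: sumr_ge0 => i _; rewrite mulr_ge0.
Qed.

Lemma abscont_mix q : (forall k, lam k != 0 -> abscont (Q k) q) ->
  abscont (mix lam Q) q.
Proof.
move=> Qq x; apply: contraNN => /eqP qx; apply/eqP/big1 => k _.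
have [->|lamk] := eqVneq (lam k) 0; first by rewrite mul0r.
have [->|Qkx] := eqVneq (Q k x) 0; first by rewrite mulr0.
by have := Qq k lamk x Qkx; rewrite qx eqxx.
Qed.

Lemma crossln_mix q : crossln (mix lam Q) q = \sum_(k < n) lam k * crossln (Q k) q.
Proof.
rewrite /crossln /mix; under eq_bigr do rewrite mulr_suml.
rewrite exchange_big /=; apply: eq_bigr => k _; rewrite mulr_sumr.
by apply: eq_bigr => x _; rewrite mulrA.
Qed.

End Mixture.

Definition convex_pred (R : realType) (X : finType) (Pi : (X -> R) -> Prop) :=
  forall q1 q2 (t : R), Pi q1 -> Pi q2 -> 0 <= t <= 1 ->
    Pi (fun x => t * q1 x + (1 - t) * q2 x).

Lemma convex_pred_mix (R : realType) (X : finType) (Pi : (X -> R) -> Prop)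
    n (lam : 'I_n -> R) (Q : 'I_n -> X -> R) :
  convex_pred Pi -> in_simplex lam -> (forall k, Pi (Q k)) -> Pi (mix lam Q).
Proof.
move=> Pi_conv; elim: n lam Q => [|n IH] lam Q [lam0 lam1] PiQ.
  by move: lam1; rewrite big_ord0 => /eqP; rewrite eq_sym oner_eq0.
rewrite big_ord_recl in lam1.
set s := \sum_(i < n) lam (lift ord0 i) in lam1.
have [s0|s_neq0] := eqVneq s 0.
  have lam_lift0 := psumr_eq0P (fun i _ => lam0 (lift ord0 i)) s0.
  suff -> : mix lam Q = Q ord0 by [].
  apply: funext => x; rewrite /mix big_ord_recl big1 => [|i _]; last first.
    by rewrite lam_lift0 ?mul0r.
  by rewrite addr0 (_ : lam ord0 = 1) ?mul1r //; lra.
have s_gt0 : 0 < s by rewrite lt_def s_neq0 sumr_ge0.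
pose lam' (i : 'I_n) := lam (lift ord0 i) / s.
have PiQ' : Pi (mix lam' (fun i => Q (lift ord0 i))).
  apply: IH => //; split; last by rewrite -mulr_suml divff.
  by move=> k; exact: divr_ge0 (lam0 _) (ltW s_gt0).
suff -> : mix lam Q = fun x => lam ord0 * Q ord0 x +
    (1 - lam ord0) * mix lam' (fun i => Q (lift ord0 i)) x.
  by apply: Pi_conv => //; apply/andP; split; [exact: lam0 | lra].
apply: funext => x; rewrite /mix big_ord_recl (_ : 1 - lam ord0 = s); last by lra.
rewrite mulr_sumr; congr (_ + _); apply: eq_bigr => i _.
by rewrite /lam' mulrA mulrCA divff ?mulr1.
Qed.

Section LinearModel.
Variables (R : realType) (X : finType).
Variables (Pi : (X -> R) -> Prop) (pistar : (X -> R) -> X -> R).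
Hypothesis Pi_distr : forall q, Pi q -> is_distr q.
Hypothesis Pi_convex : convex_pred Pi.
Hypothesis pistar_in : forall P, is_distr P -> Pi (pistar P).
Hypothesis pythagoras : forall P, is_distr P -> forall q, Pi q ->
  KL P q = (KL P (pistar P) + KL (pistar P) q)%E.

Variables (p : nat) (lam : 'I_p -> R) (phat : 'I_p -> X -> R).
Hypothesis lam_simplex : in_simplex lam.
Hypothesis phat_distr : forall k, is_distr (phat k).
Hypothesis phat_KL_lty : forall k, (KL (phat k) (pistar (phat k)) < +oo)%E.

Let pi k := pistar (phat k).
Let P := mix lam phat.
Let m := mix lam pi.

Let lam_ge0 : forall k, 0 <= lam k. Proof. by case: lam_simplex. Qed.
Let phat_ge0 : forall k x, 0 <= phat k x. Proof. by move=> k; case: (phat_distr k). Qed.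
Let pi_distr k : is_distr (pi k). Proof. exact/Pi_distr/pistar_in. Qed.
Let pi_ge0 : forall k x, 0 <= pi k x. Proof. by move=> k; case: (pi_distr k). Qed.
Let phat_pi : forall k, abscont (phat k) (pi k). Proof. by move=> k; exact: KL_lty_abscont. Qed.

Lemma pythagoras_abscont k q : Pi q -> abscont (phat k) q ->
  abscont (pi k) q /\ KLr (phat k) q = KLr (phat k) (pi k) + KLr (pi k) q.
Proof.
move=> Piq phat_q; have := pythagoras (phat_distr k) Piq.
rewrite (KL_abscont phat_q) (KL_abscont (@phat_pi k)) => E.
have pi_q : abscont (pi k) q.
  by apply: KL_lty_abscont; move: E; case: (KL (pi k) q) => // r _; exact: ltry.
by split => //; move: E; rewrite (KL_abscont pi_q) -EFinD => -[].
Qed.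

Lemma crossln_phat k q : Pi q -> abscont (phat k) q ->
  crossln (phat k) q = crossln (phat k) (phat k) - KLr (phat k) (pi k)
                       - crossln (pi k) (pi k) + crossln (pi k) q.
Proof.
move=> Piq phat_q; have [pi_q] := pythagoras_abscont Piq phat_q.
have q0 x : 0 <= q x by case: (Pi_distr Piq).
by rewrite !KLr_crossln //; lra.
Qed.

Definition mix_gap : R := crossln P P - \sum_(k < p) lam k *
  (crossln (phat k) (phat k) - KLr (phat k) (pi k) - crossln (pi k) (pi k)).

Lemma KLr_mix_add_crossln q : Pi q -> abscont P q ->
  abscont m q /\ KLr P q + crossln m q = mix_gap.
Proof.
move=> Piq P_q.
have q0 x : 0 <= q x by case: (Pi_distr Piq).
have phat_q k : lam k != 0 -> abscont (phat k) q.
  by move=> lamk; apply: abscont_trans P_q; exact: abscont_mix_component.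
split.
  by apply: abscont_mix => k lamk; case: (pythagoras_abscont Piq (phat_q k lamk)).
rewrite (KLr_crossln (mix_ge0 lam_ge0 phat_ge0) q0 P_q) /mix_gap /P /m !crossln_mix.
suff -> : \sum_(k < p) lam k * crossln (phat k) q =
    \sum_(k < p) lam k * (crossln (phat k) (phat k) - KLr (phat k) (pi k)
       - crossln (pi k) (pi k)) + \sum_(k < p) lam k * crossln (pi k) q by lra.
rewrite -big_split; apply: eq_bigr => k _ /=.
have [->|lamk] := eqVneq (lam k) 0; first by rewrite !mul0r addr0.
by rewrite -mulrDr (crossln_phat Piq (phat_q k lamk)).
Qed.

Lemma KL_mix_pistar_le q : Pi q -> (KL P m <= KL P q)%E.
Proof.
move=> Piq; have Pim : Pi m by apply: convex_pred_mix => // k; exact: pistar_in.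
have [P_q|] := pselect (abscont P q); last first.
  move=> /existsNP[x /not_implyP[Px /negP/negPn/eqP qx]].
  by rewrite (KL_eqy Px qx) leey.
have P_m : abscont P m.
  apply: abscont_mix => k lamk; apply: abscont_trans (@phat_pi k) _.
  exact: abscont_mix_component.
have [_ gap_m] := KLr_mix_add_crossln Pim P_m.
have [m_q gap_q] := KLr_mix_add_crossln Piq P_q.
rewrite (KL_abscont P_m) (KL_abscont P_q) lee_fin -(addrK (crossln m m) (KLr P m)).
rewrite -(addrK (crossln m q) (KLr P q)) gap_m gap_q.
exact: lerB (lexx _) (crossln_le_self (Pi_distr Pim) (Pi_distr Piq) m_q).
Qed.

End LinearModel.

Theorem mainTheorem10 (R : realType) (X : finType) (p : nat) (hp : (1 <= p)%N)
  (Pi : (X -> R) -> Prop) (pistar : (X -> R) -> (X -> R))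
  (HPi_distr : forall q, Pi q -> is_distr q)
  (HPi_conv : forall q1 q2 (t : R), Pi q1 -> Pi q2 -> 0 <= t <= 1 ->
      Pi (fun x => t * q1 x + (1 - t) * q2 x))
  (Hmem : forall P, is_distr P -> Pi (pistar P))
  (Hmin : forall P, is_distr P -> forall q, Pi q -> (KL P (pistar P) <= KL P q)%E)
  (Huniq : forall P, is_distr P -> forall q, Pi q ->
      (forall q', Pi q' -> (KL P q <= KL P q')%E) -> q = pistar P)
  (Hpyth : forall P, is_distr P -> forall q, Pi q ->
      KL P q = (KL P (pistar P) + KL (pistar P) q)%E)
  (phat : 'I_p -> X -> R) (Hphat : forall k, is_distr (phat k))
  (Hfin : forall k, (KL (phat k) (pistar (phat k)) < +oo)%E)
  (lam : 'I_p -> R) (Hlam : in_simplex lam) :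
  pistar (mix lam phat) = mix lam (fun k => pistar (phat k)).
Proof.
have lam_ge0 k : 0 <= lam k by case: Hlam.
symmetry; apply: Huniq.
- exact: is_distr_mix.
- by apply: convex_pred_mix => // k; exact: Hmem.
- exact: KL_mix_pistar_le.
Qed.
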